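(* Let $(X,\alpha)$ be a Cantor minimal system and let $c:X\to\mathbb{Z}_2$ be a continuous map. Suppose $PS(\alpha)\neq PS(\alpha\times c)$. Then there exists $n\in\mathbb{N}$ such that $2^{n-1}\in PS(\alpha)$, $2^n\notin PS(\alpha)$ and $PS(\alpha\times c)=2PS(\alpha)\cup PS(\alpha)$. Furthermore, if $f\in C(X,\mathbb{Z})$ satisfies $2^{n-1}[f]=[1_X]$ in $K^0(X,\alpha)$, then $[c]=[f]+2K^0(X,\alpha)$ in $K^0(X,\alpha)/2K^0(X,\alpha)$.
   Context: A Cantor minimal system $(X,\alpha)$ is a Cantor set $X$ with a homeomorphism $\alpha$ having no nontrivial closed invariant subsets. $\mathbb{N}=\{1,2,\dots\}$. $\alpha\times c$ is the homeomorphism $(x,k)\mapsto(\alpha(x),k+c(x))$ of $X\times\mathbb{Z}_2$. $K^0(X,\alpha)=C(X,\mathbb{Z})/\{f-f\circ\alpha^{-1}:f\in C(X,\mathbb{Z})\}$ with class $[f]$; $K^0(X,\alpha)/2K^0(X,\alpha)$ is identified with $C(X,\mathbb{Z}_2)/\{f-f\circ\alpha^{-1}:f\in C(X,\mathbb{Z}_2)\}$, and $[c]$ is the class of $c$ (equivalently, the class mod $2K^0$ of the $\{0,1\}$-valued integer lift of $c$). For a homeomorphism $\gamma$ of a compact space $Z$, the periodic spectrum $PS(\gamma)$ is the set of $p\in\mathbb{N}$ for which there is a clopen $U\subset Z$ with $U,\gamma(U),\dots,\gamma^{p-1}(U)$ pairwise disjoint and covering $Z$. $2PS(\alpha)=\{2p:p\in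 PS(\alpha)\}$. *)

From HB Require Import structures.
From mathcomp Require Import all_boot all_order all_algebra.
From mathcomp Require Import all_classical all_reals topology cantor.
Set Implicit Arguments. Unset Strict Implicit. Unset Printing Implicit Defensive.
Import Order.TTheory GRing.Theory Num.Theory.
Local Open Scope classical_set_scope.

Definition is_cantor_set (X : topologicalType) : Prop :=
  exists (h : cantor_space -> X) (g : X -> cantor_space),
    [/\ cancel h g, cancel g h, continuous h & continuous g].

Definition cantor_minimal (X : topologicalType) (alpha alphai : X -> X) : Prop :=
  [/\ is_cantor_set X,
      cancel alpha alphai /\ cancel alphai alpha,
      continuous alpha, continuous alphai &
      (forall A : set X, closed A -> alpha @` A = A -> A = set0 \/ A = setT)].

(* Z_2 is modelled by bool (discrete topology), addition by xor. *)
Definition skew_product (X : topologicalType) (alpha : X -> X) (c : X -> bool)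
  : X * bool -> X * bool :=
  fun z => (alpha z.1, addb z.2 (c z.1)).

Definition periodic_spectrum (Z : topologicalType) (gamma : Z -> Z) : set nat :=
  [set p | (0 < p)%N /\ exists U : set Z, [/\ open U, closed U,
     (forall i j, (i < p)%N -> (j < p)%N -> i <> j ->
        (iter i gamma @` U) `&` (iter j gamma @` U) = set0) &
     (forall z, exists2 i, (i < p)%N & (iter i gamma @` U) z)]].

Definition cont_int (X : topologicalType) (f : X -> int) : Prop :=
  forall z : int, open (f @^-1` [set z]).

Definition cobound (X : topologicalType) (alphai : X -> X) (d : X -> int) : Prop :=
  exists h : X -> int, cont_int h /\ forall x, d x = (h x - h (alphai x))%R.

Definition lift01 (X : Type) (c : X -> bool) : X -> int := fun x => Posz (nat_of_bool (c x)).

From HB Require Import structures.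
From mathcomp Require Import all_boot all_order all_algebra.
From mathcomp Require Import all_classical all_reals topology cantor.
From mathcomp Require Import zify ring.
Import Order.TTheory GRing.Theory Num.Theory.
Local Open Scope classical_set_scope.
Local Open Scope ring_scope.

(** A number p lies in PS(g) exactly when g has a p-clock: a locally constant
  F : Z -> int with F (g z) = F z + 1 mod p (take U = {F = 0 mod p}).  Clocks
  of alpha pull back to alpha x c.  Conversely, if F is a p-clock of alpha x c,
  then D = F(-, 1) - F(-, 0) satisfies D o alpha = (-1)^c D mod p, so by
  minimality D = +-a mod p for a constant a.  If p does not divide 2a, the
  sign of D selects a section s with s o alpha = s + c, and F(x, s x) is a
  p-clock of alpha.  Otherwise either F(-, 0) is already a p-clock of alpha,
  or p = 2q and H = F(-, 0) is a twisted q-clock: H o alpha = H + 1 - c q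
  mod 2q.  A twisted clock can be cut down to its 2-part 2^(n-1) and extended
  by odd clocks of alpha (Bezout), which gives PS(alpha x c) = 2 PS(alpha) u
  PS(alpha).  Finally, with e = (H o alpha - H - 1 + 2^(n-1) c) / 2^n for a
  twisted 2^(n-1)-clock H, the class 2^(n-1) [c - f - 2 e] vanishes in K^0,
  and K^0 of a minimal system is torsion free. *)

Set Implicit Arguments. Unset Strict Implicit.

Section LocallyConstant.
Variable T : topologicalType.

Definition locally_constant (U : Type) (u : T -> U) :=
  forall x, nbhs x (u @^-1` [set u x]).

Lemma locally_constant_open (U : Type) (u : T -> U) (S : set U) :
  locally_constant u -> open (u @^-1` S).
Proof. by move=> uc; rewrite openE => x Sx; apply: filterS (uc x) => y /= ->. Qed.

Lemma locally_constant_closed (U : Type) (u : T -> U) (S : set U) :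
  locally_constant u -> closed (u @^-1` S).
Proof. by move=> uc; rewrite -openC preimage_setC; exact: locally_constant_open. Qed.

Lemma cont_intP (f : T -> int) : cont_int f <-> locally_constant f.
Proof.
split=> [fc x | fc z]; last exact: locally_constant_open.
by have := fc (f x); rewrite openE => /(_ x erefl).
Qed.

Lemma locally_constant_map (U W : Type) (h : U -> W) (u : T -> U) :
  locally_constant u -> locally_constant (fun x => h (u x)).
Proof. by move=> uc x; apply: filterS (uc x) => y /= ->. Qed.

Lemma locally_constant_map2 (U V W : Type) (h : U -> V -> W) (u : T -> U) (v : T -> V) :
  locally_constant u -> locally_constant v -> locally_constant (fun x => h (u x) (v x)).
Proof. by move=> uc vc x; apply: filterS (filterI (uc x) (vc x)) => y [/= -> ->]. Qed.

Lemma locally_constant_continuous (S : topologicalType) (u : T -> S) :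
  locally_constant u -> continuous u.
Proof. by move=> uc x B uB; apply: filterS (uc x) => y /= ->; exact: nbhs_singleton. Qed.

End LocallyConstant.

Lemma locally_constant_comp (T S : topologicalType) (U : Type) (u : S -> U) (phi : T -> S) :
  locally_constant u -> continuous phi -> locally_constant (fun x => u (phi x)).
Proof. by move=> uc phic x; exact: phic x _ (uc (phi x)). Qed.

Lemma continuous_bool_locally_constant (T : topologicalType) (c : T -> bool) :
  continuous c -> locally_constant c.
Proof.
by move=> cc; apply: (@locally_constant_comp _ bool _ id c) => // b; rewrite /nbhs.
Qed.

Lemma continuous_pair (X Y Z : topologicalType) (f : X -> Y) (g : X -> Z) :
  continuous f -> continuous g -> continuous (fun x => (f x, g x)).
Proof. by move=> fc gc x; apply: cvg_pair; [exact: fc | exact: gc]. Qed.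

Lemma locally_constant_fst (X Y : topologicalType) (U : Type) (u : X -> U) :
  locally_constant u -> locally_constant (fun y : X * Y => u y.1).
Proof. by move=> uc; apply: locally_constant_comp uc _ => -[x y]; exact: cvg_fst. Qed.

Lemma locally_constant_section (X Y : topologicalType) (U : Type)
    (F : X * Y -> U) (s : X -> Y) :
  locally_constant F -> continuous s -> locally_constant (fun x => F (x, s x)).
Proof.
move=> Fc sc; apply: locally_constant_comp Fc _.
by apply: continuous_pair => // x; exact: cvg_id.
Qed.

Lemma cantor_set_inhabited (X : topologicalType) : is_cantor_set X -> inhabited X.
Proof. by case=> h _; constructor; exact: h (fun _ => false). Qed.

Lemma dvdz_lincomb (p a b x u v : int) :
  (p %| a)%Z -> (p %| b)%Z -> x = u * a + v * b -> (p %| x)%Z.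
Proof. by move=> pa pb ->; rewrite rpredD ?dvdz_mull. Qed.

Lemma dvdz_subE (p a b : int) : (p %| a - b)%Z -> (p %| a)%Z = (p %| b)%Z.
Proof. by move=> pab; rewrite -[a](subrK b) rpredDl. Qed.

Lemma dvdz_sub_small (p i j : nat) :
  (i < p)%N -> (j < p)%N -> (p%:Z %| i%:Z - j%:Z)%Z -> i = j.
Proof.
move=> ip jp; rewrite /dvdz => /dvdn_leq; case: (eqVneq i j) => // ij; lia.
Qed.

Lemma dvdz_double_ndvdz (p : nat) (a : int) : (p%:Z %| 2 * a)%Z -> ~~ (p%:Z %| a)%Z ->
  exists2 q : nat, p = (2 * q)%N & ((2 * q)%N%:Z %| a - q%:Z)%Z.
Proof.
move=> p2a pa.
have p_even : ~~ odd p.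
  apply: contra pa => p_odd; rewrite -(Gauss_dvdzr _ (_ : coprimez p 2)) //.
  by rewrite coprimezE coprime_sym coprime2n.
have [q p2q] : exists q, p = (2 * q)%N.
  by exists p./2; rewrite -[LHS]odd_double_half (negbTE p_even) mul2n.
exists q => //; move: p2a pa; rewrite p2q.
have -> : (2 * q)%N%:Z = 2 * q%:Z by rewrite PoszM.
rewrite dvdz_mul2l // => /dvdzP[k ->].
have [j [->|->]] : exists j, k = j * 2 \/ k = j * 2 + 1.
  exists (k %/ 2)%Z; have := divz_eq k 2.
  by have := @ltz_pmod k 2 isT; have := @modz_ge0 k 2 isT; lia.
- by rewrite -mulrA dvdz_mull ?dvdzz.
- by move=> _; apply/dvdzP; exists j; ring.
Qed.

Lemma pow2_odd_decomp (n : nat) : (0 < n)%N -> exists v u, n = (2 ^ v * u)%N /\ odd u.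
Proof.
move=> n_gt0; exists (logn 2 n), (n`_2^')%N; split; first by rewrite -p_part partnC.
by rewrite -coprime2n (pnat_coprime (@pnat_id 2 isT)) ?part_pnat.
Qed.

Definition has_clock (Z : topologicalType) (g : Z -> Z) (p : nat) :=
  (0 < p)%N /\ exists F : Z -> int,
    locally_constant F /\ forall z, (p%:Z %| F (g z) - F z - 1)%Z.

Section Clocks.
Variables (Z : topologicalType) (g : Z -> Z).

Lemma has_clock_dvd p d : has_clock g p -> (d %| p)%N -> (0 < d)%N -> has_clock g d.
Proof.
case=> _ [F [Fc Fg]] dp d_gt0; split=> //; exists F; split=> // z.
by apply: dvdz_trans (Fg z).
Qed.

Lemma has_clock_mul p1 p2 :
  has_clock g p1 -> has_clock g p2 -> coprime p1 p2 -> has_clock g (p1 * p2).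
Proof.
move=> [p1_gt0 [F1 [F1c F1g]]] [p2_gt0 [F2 [F2c F2g]]].
move=> /(@coprimezP p1 p2)[[u v] /= uv].
split; first by rewrite muln_gt0 p1_gt0.
exists (fun z => v * p2%:Z * F1 z + u * p1%:Z * F2 z); split.
  exact: (locally_constant_map2 (fun a b => v * p2%:Z * a + u * p1%:Z * b)).
move=> z; have -> : v * p2%:Z * F1 (g z) + u * p1%:Z * F2 (g z)
    - (v * p2%:Z * F1 z + u * p1%:Z * F2 z) - 1
  = v * ((F1 (g z) - F1 z - 1) * p2%:Z) + u * (p1%:Z * (F2 (g z) - F2 z - 1))
    + (u * p1%:Z + v * p2%:Z - 1) by ring.
rewrite uv subrr addr0 PoszM.
by apply: rpredD; apply: dvdz_mull; apply: dvdz_mul; rewrite ?F1g ?F2g.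
Qed.

Lemma has_clock_pow2_odd w t :
  has_clock g (2 ^ w) -> has_clock g t -> odd t -> has_clock g (2 ^ w * t).
Proof.
move=> g2w gt t_odd; case: w g2w => [_|w g2w]; first by rewrite mul1n.
by apply: has_clock_mul; rewrite // coprime_pexpl // coprime2n.
Qed.

End Clocks.

Lemma iter_can (A : Type) (f g : A -> A) n : cancel f g -> cancel (iter n f) (iter n g).
Proof. by move=> fK; elim: n => // n IHn x; rewrite [iter n.+1 f x]iterSr /= IHn fK. Qed.

Lemma image_iter_can (A : Type) (f g : A -> A) (U : set A) n :
  cancel f g -> cancel g f -> iter n f @` U = iter n g @^-1` U.
Proof.
move=> fK gK; apply/seteqP; split=> [_ [u Uu <-]|z Uz].
  by rewrite /preimage /= iter_can.
by exists (iter n g z); rewrite // (iter_can _ gK).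
Qed.

Lemma open_iter_preimage (Z : topologicalType) (g : Z -> Z) n (A : set Z) :
  continuous g -> open A -> open (iter n g @^-1` A).
Proof.
move=> gc; elim: n A => // n IHn A Ao.
exact: IHn _ (proj1 (continuousP g) gc A Ao).
Qed.

Section PeriodicSpectrum.
Variables (Z : topologicalType) (g gi : Z -> Z).
Hypotheses (gK : cancel g gi) (giK : cancel gi g).

Lemma has_clock_periodic_spectrum : has_clock g `<=` periodic_spectrum g.
Proof.
move=> p [p_gt0 [F [Fc Fg]]]; split=> //.
have Fgi z : (p%:Z %| F z - F (gi z) - 1)%Z by have := Fg (gi z); rewrite giK.
have Fiter n z : (p%:Z %| F z - F (iter n gi z) - n%:Z)%Z.
  elim: n z => [|n IHn] z; first by rewrite /= !subrr.
  by apply: (dvdz_lincomb (u := 1) (v := 1) (IHn z) (Fgi (iter n gi z))) => /=; lia.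
have imgE n U : iter n g @` U = iter n gi @^-1` U by exact: image_iter_can.
exists (F @^-1` [set k | (p%:Z %| k)%Z]); split.
- exact: locally_constant_open.
- exact: locally_constant_closed.
- move=> i j ip jp ij; rewrite !imgE; apply/seteqP; split=> // z [/= Fi Fj].
  apply: ij; apply: dvdz_sub_small ip jp _.
  have -> : i%:Z - j%:Z = (F z - F (iter j gi z) - j%:Z) - (F z - F (iter i gi z) - i%:Z)
     - (F (iter i gi z) - F (iter j gi z)) by ring.
  by apply: rpredB; apply: rpredB; rewrite ?Fiter.
- move=> z; have p_neq0 : p%:Z != 0 by rewrite eqz_nat -lt0n.
  pose i := `|(F z %% p)%Z|%N.
  have iE : i%:Z = (F z %% p)%Z by rewrite gez0_abs ?modz_ge0.
  exists i; first by rewrite -ltz_nat iE ltz_pmod.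
  rewrite imgE /preimage /=.
  have -> : F (iter i gi z) = (F z %/ p)%Z * p - (F z - F (iter i gi z) - i%:Z).
    rewrite iE; move: (divz_eq (F z) p); set q := (F z %/ p)%Z; set r := (F z %% p)%Z.
    by move=> Fz; rewrite [in RHS]Fz; ring.
  by rewrite rpredB ?Fiter ?dvdz_mull.
Qed.

Lemma periodic_spectrum_has_clock : continuous gi -> periodic_spectrum g `<=` has_clock g.
Proof.
move=> gic p [p_gt0 [U [Uo _ Udisj Ucov]]]; split=> //.
have imgE n : iter n g @` U = iter n gi @^-1` U by exact: image_iter_can.
have cov z : exists i, (i < p)%N /\ U (iter i gi z).
  by have [i ip] := Ucov z; rewrite imgE; exists i.
have uniq z i j : (i < p)%N -> (j < p)%N -> U (iter i gi z) -> U (iter j gi z) -> i = j.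
  move=> ip jp Ui Uj; apply: contrapT => ij.
  by have := Udisj i j ip jp ij; rewrite !imgE => /seteqP[/(_ z (conj Ui Uj))].
have [idx idxP] := choice cov.
exists (fun z => (idx z)%:Z); split.
  apply: locally_constant_map => x.
  have := open_iter_preimage (idx x) gic Uo; rewrite openE => /(_ x (idxP x).2).
  by apply: filterS => y Uy; exact: uniq (idxP y).1 (idxP x).1 (idxP y).2 Uy.
move=> z; have [iz_lt Uiz] := idxP z; have [igz_lt Uigz] := idxP (g z).
have Ui : U (iter (idx z).+1 gi (g z)) by rewrite iterSr gK.
case Eg: (idx (g z)) => [|j] in igz_lt Uigz *.
- have iz_last : (idx z).+1 = p.
    case: (ltnP (idx z).+1 p) => [lt|]; last by lia.
    by have := uniq _ _ _ igz_lt lt Uigz Ui.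
  by apply/dvdzP; exists (-1); lia.
- have -> : j = idx z by apply: uniq (ltnW igz_lt) iz_lt _ Uiz; rewrite iterSr gK in Uigz.
  by apply/dvdzP; exists 0; lia.
Qed.

Lemma periodic_spectrumE : continuous gi -> periodic_spectrum g = has_clock g.
Proof.
move=> gic; apply/seteqP; split; first exact: periodic_spectrum_has_clock.
exact: has_clock_periodic_spectrum.
Qed.

End PeriodicSpectrum.

Definition skew_inv (X : topologicalType) (alphai : X -> X) (c : X -> bool) (y : X * bool) :=
  (alphai y.1, addb y.2 (c (alphai y.1))).

Lemma skew_productK (X : topologicalType) (alpha alphai : X -> X) (c : X -> bool) :
  cancel alpha alphai -> cancel (skew_product alpha c) (skew_inv alphai c).
Proof. by move=> aK [x k]; rewrite /skew_inv /= aK addbK. Qed.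

Lemma skew_invK (X : topologicalType) (alpha alphai : X -> X) (c : X -> bool) :
  cancel alphai alpha -> cancel (skew_inv alphai c) (skew_product alpha c).
Proof. by move=> aiK [x k]; rewrite /skew_product /= aiK addbK. Qed.

Lemma continuous_skew_inv (X : topologicalType) (alphai : X -> X) (c : X -> bool) :
  continuous alphai -> continuous c -> continuous (skew_inv alphai c).
Proof.
move=> aic cc; have fstc : continuous (fun y : X * bool => alphai y.1).
  by move=> y; apply: continuous_comp; [exact: cvg_fst | exact: aic].
apply: continuous_pair => //; apply: locally_constant_continuous.
apply: (locally_constant_map2 addb).
  by apply: continuous_bool_locally_constant => y; exact: cvg_snd.
exact: locally_constant_comp (continuous_bool_locally_constant cc) fstc.
Qed.

Section SkewProduct.
Variables (X : topologicalType) (alpha : X -> X) (c : X -> bool).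

Definition twisted_clock (q : nat) := exists H : X -> int, locally_constant H /\
  forall x, ((2 * q)%N%:Z %| H (alpha x) - H x - 1 + lift01 c x * q%:Z)%Z.

Lemma has_clock_skew_product p : has_clock alpha p -> has_clock (skew_product alpha c) p.
Proof.
case=> p_gt0 [F [Fc Fa]]; split=> //; exists (fun y => F y.1).
by split=> [|[x k]]; [exact: locally_constant_fst | exact: Fa].
Qed.

Lemma twisted_clock_skew_product q :
  (0 < q)%N -> twisted_clock q -> has_clock (skew_product alpha c) (2 * q).
Proof.
move=> q_gt0 [H [Hc Ha]]; split; first by rewrite muln_gt0.
exists (fun y => H y.1 + (nat_of_bool y.2)%:Z * q%:Z); split.
  apply: (locally_constant_map2 (fun a (b : bool) => a + (nat_of_bool b)%:Z * q%:Z)).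
    exact: locally_constant_fst.
  by apply: continuous_bool_locally_constant => y; exact: cvg_snd.
case=> x k.
apply: (dvdz_lincomb (u := 1) (v := - (nat_of_bool k)%:Z * (nat_of_bool (c x))%:Z)
  (Ha x) (dvdzz _)).
by rewrite /skew_product /lift01 /= PoszM; case: k; case: (c x) => /=; ring.
Qed.

Lemma twisted_clock_has_clock q : (0 < q)%N -> twisted_clock q -> has_clock alpha q.
Proof.
move=> q_gt0 [H [Hc Ha]]; split=> //; exists H; split=> // x.
have qHa : (q%:Z %| H (alpha x) - H x - 1 + lift01 c x * q%:Z)%Z.
  by apply: dvdz_trans (Ha x); rewrite PoszM dvdz_mull.
by apply: (dvdz_lincomb (u := 1) (v := - lift01 c x) qHa (dvdzz _)); ring.
Qed.

Lemma twisted_clock_pow2_part v u : twisted_clock (2 ^ v * u) -> odd u -> twisted_clock (2 ^ v).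
Proof.
move=> [H [Hc Ha]] u_odd; exists H; split=> // x.
have uE : u%:Z = 2 * (u./2)%:Z + 1 by have := odd_double_half u; rewrite u_odd; lia.
have Hax :
    ((2 * 2 ^ v)%N%:Z %| H (alpha x) - H x - 1 + lift01 c x * (2 ^ v * u)%N%:Z)%Z.
  by apply: dvdz_trans (Ha x); rewrite dvdzE /= mulnA dvdn_mulr.
apply: (dvdz_lincomb (u := 1) (v := - lift01 c x * (u./2)%:Z) Hax (dvdzz _)).
by rewrite !PoszM uE; ring.
Qed.

Lemma twisted_clock_mul_odd r t :
  twisted_clock r -> has_clock alpha t -> odd t -> coprime (2 * r) t -> twisted_clock (r * t).
Proof.
move=> [H [Hc Ha]] [t_gt0 [K [Kc Ka]]] t_odd /(@coprimezP (2 * r) t)[[a b] /= ab].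
have tE : t%:Z = 2 * (t./2)%:Z + 1 by have := odd_double_half t; rewrite t_odd; lia.
exists (fun x => b * t%:Z * H x + a * (2 * r)%N%:Z * K x); split.
  exact: (locally_constant_map2 (fun h k => b * t%:Z * h + a * (2 * r)%N%:Z * k)).
move=> x; have -> : (2 * (r * t))%N%:Z = (2 * r)%N%:Z * t%:Z by rewrite mulnA PoszM.
have -> : b * t%:Z * H (alpha x) + a * (2 * r)%N%:Z * K (alpha x)
    - (b * t%:Z * H x + a * (2 * r)%N%:Z * K x) - 1 + lift01 c x * (r * t)%N%:Z
  = b * ((H (alpha x) - H x - 1 + lift01 c x * r%:Z) * t%:Z)
    + a * ((2 * r)%N%:Z * (K (alpha x) - K x - 1))
    + (lift01 c x * (a * r%:Z + b * (t./2)%:Z)) * ((2 * r)%N%:Z * t%:Z)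
    + (a * (2 * r)%N%:Z + b * t%:Z - 1) * (1 - lift01 c x * r%:Z * t%:Z).
  by rewrite !PoszM tE; ring.
rewrite ab subrr mul0r addr0; apply: rpredD; first apply: rpredD; apply: dvdz_mull.
- by apply: dvdz_mul; [exact: Ha | exact: dvdzz].
- by apply: dvdz_mul; [exact: dvdzz | exact: Ka].
- exact: dvdzz.
Qed.

Lemma has_clock_or_twisted_clock p (H : X -> int) (a : int) :
  (0 < p)%N -> locally_constant H -> (p%:Z %| 2 * a)%Z ->
  (forall x, (p%:Z %| H (alpha x) - H x - 1 + lift01 c x * a)%Z) ->
  has_clock alpha p \/ exists2 q, p = (2 * q)%N & twisted_clock q.
Proof.
move=> p_gt0 Hc p2a Ha; have [pa | pNa] := boolP (p%:Z %| a)%Z.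
  left; split=> //; exists H; split=> // x.
  by apply: (dvdz_lincomb (u := 1) (v := - lift01 c x) (Ha x) pa); ring.
right; have [q pE qa] := dvdz_double_ndvdz p2a pNa.
rewrite -pE in qa; exists q => //; exists H; split=> // x; rewrite -pE.
by apply: (dvdz_lincomb (u := 1) (v := - lift01 c x) (Ha x) qa); ring.
Qed.

Lemma skew_sign_section p (D : X -> int) (a : int) : locally_constant D ->
  (forall x, (p%:Z %| D (alpha x) - (-1) ^+ c x * D x)%Z) ->
  (forall x, (p%:Z %| D x - a)%Z || (p%:Z %| D x + a)%Z) -> ~~ (p%:Z %| 2 * a)%Z ->
  exists2 s : X -> bool, locally_constant s & forall x, s (alpha x) = addb (s x) (c x).
Proof.
move=> Dc Da Dpm p2Na; exists (fun x => p%:Z %| D x + a)%Z.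
  exact: (locally_constant_map (fun d => p%:Z %| d + a)%Z).
have plusE x : (p%:Z %| D x + a)%Z = ~~ (p%:Z %| D x - a)%Z.
  have excl : ~~ ((p%:Z %| D x + a) && (p%:Z %| D x - a))%Z.
    apply: contra p2Na => /andP[h1 h2].
    have -> : 2 * a = (D x + a) - (D x - a) by ring.
    exact: rpredB.
  by move: (Dpm x) excl; case: (p%:Z %| D x - a)%Z; case: (p%:Z %| D x + a)%Z.
move=> x; have := Da x.
case: (c x); rewrite ?expr1 ?expr0 ?mulN1r ?mul1r ?opprK => Dax.
- rewrite addbT (plusE x) negbK (@dvdz_subE _ _ (- (D x - a))) ?rpredN //.
  by have -> : D (alpha x) + a - - (D x - a) = D (alpha x) + D x by ring.
- rewrite addbF (@dvdz_subE _ _ (D x + a)) //.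
  by have -> : D (alpha x) + a - (D x + a) = D (alpha x) - D x by ring.
Qed.

Lemma has_clock_skew_section p (F : X * bool -> int) (s : X -> bool) :
  (0 < p)%N -> locally_constant F ->
  (forall y, (p%:Z %| F (skew_product alpha c y) - F y - 1)%Z) ->
  locally_constant s -> (forall x, s (alpha x) = addb (s x) (c x)) -> has_clock alpha p.
Proof.
move=> p_gt0 Fc Fs sc sa; split=> //; exists (fun x => F (x, s x)); split=> [|x].
  exact: locally_constant_section Fc (locally_constant_continuous sc).
by rewrite sa; exact: Fs (x, s x).
Qed.

End SkewProduct.

Section Minimal.
Variables (X : topologicalType) (alpha alphai : X -> X).
Hypothesis minimal : cantor_minimal alpha alphai.

Lemma minimal_invariant (A : set X) :
  closed A -> (forall x, A (alpha x) <-> A x) -> forall x0, A x0 -> forall x, A x.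
Proof.
case: minimal => _ [_ aiK] _ _ minA Acl Aa x0 Ax0.
have : alpha @` A = A.
  apply/seteqP; split=> [_ [x Ax <-]|x Ax]; first exact/Aa.
  by exists (alphai x); rewrite ?aiK //; apply/Aa; rewrite aiK.
by case/(minA A Acl) => A0; [move: Ax0; rewrite A0 | rewrite A0].
Qed.

Lemma minimal_inhabited : inhabited X.
Proof. by case: minimal => /cantor_set_inhabited. Qed.

Lemma coboundary_div m (k : X -> int) : (0 < m)%N -> locally_constant k ->
  (forall x, (m%:Z %| k x - k (alphai x))%Z) ->
  exists2 k' : X -> int, locally_constant k' &
    forall x, k x - k (alphai x) = m%:Z * (k' x - k' (alphai x)).
Proof.
move=> m_gt0 kc km; have [x0] := minimal_inhabited.
have [_ [aK _] _ _ _] := minimal.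
have kx0 : forall x, (m%:Z %| k x - k x0)%Z.
  apply: (@minimal_invariant (fun x => (m%:Z %| k x - k x0)%Z) _ _ x0).
  - exact (locally_constant_closed (S := [set z | (m%:Z %| z - k x0)%Z]) kc).
  - move=> x; suff -> : (m%:Z %| k (alpha x) - k x0)%Z = (m%:Z %| k x - k x0)%Z by [].
    by apply: dvdz_subE; have := km (alpha x); rewrite aK; congr (_ %| _)%Z; ring.
  - by rewrite subrr dvdz0.
exists (fun x => ((k x - k x0) %/ m)%Z).
  exact: (locally_constant_map (fun z => ((z - k x0) %/ m)%Z)).
by move=> x; rewrite mulrBr ![m%:Z * _]mulrC !divzK //; ring.
Qed.

Variable c : X -> bool.

Lemma dvdz_sign_invariant p (D : X -> int) : locally_constant D ->
  (forall x, (p%:Z %| D (alpha x) - (-1) ^+ c x * D x)%Z) ->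
  forall x0 x, (p%:Z %| D x - D x0)%Z || (p%:Z %| D x + D x0)%Z.
Proof.
move=> Dc Da x0; pose pm d := (p%:Z %| d - D x0)%Z || (p%:Z %| d + D x0)%Z.
have pm_congr d d' : (p%:Z %| d - d')%Z -> pm d = pm d'.
  move=> dd'; have shift e : (p%:Z %| d + e)%Z = (p%:Z %| d' + e)%Z.
    by apply: dvdz_subE; have -> : d + e - (d' + e) = d - d' by ring.
  by rewrite /pm !shift.
have pm_opp d : pm (- d) = pm d.
  rewrite /pm orbC; have -> : - d - D x0 = - (d + D x0) by ring.
  have -> : - d + D x0 = - (d - D x0) by ring.
  by rewrite !rpredN.
apply: (@minimal_invariant (fun x => pm (D x)) _ _ x0); last by rewrite /pm subrr dvdz0.
  exact (locally_constant_closed (S := pm) Dc).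
move=> x; rewrite (pm_congr _ _ (Da x)).
by case: (c x); rewrite ?expr1 ?expr0 ?mulN1r ?mul1r ?pm_opp.
Qed.

Lemma skew_product_clock_cases p : has_clock (skew_product alpha c) p ->
  has_clock alpha p \/ exists2 q, p = (2 * q)%N & twisted_clock alpha c q.
Proof.
move=> [p_gt0 [F [Fc Fs]]].
pose F0 x := F (x, false); pose D x := F (x, true) - F0 x.
have F0c : locally_constant F0 := locally_constant_section Fc (@cst_continuous X bool false).
have Dc : locally_constant D.
  apply: (locally_constant_map2 (fun a b => a - b)) F0c.
  exact: locally_constant_section Fc (@cst_continuous X bool true).
have Da x : (p%:Z %| D (alpha x) - (-1) ^+ c x * D x)%Z.
  have := Fs (x, false); have := Fs (x, true); rewrite /skew_product /D /F0 /=.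
  case: (c x) => /= h1 h0; rewrite ?expr1 ?expr0 ?mulN1r ?mul1r.
    by apply: (dvdz_lincomb (u := -1) (v := 1) h1 h0); ring.
  by apply: (dvdz_lincomb (u := 1) (v := -1) h1 h0); ring.
have [x0] := minimal_inhabited.
have Dpm := dvdz_sign_invariant Dc Da x0.
have [p2a | p2Na] := boolP (p%:Z %| 2 * D x0)%Z; last first.
  left; have [s sc sa] := skew_sign_section Dc Da Dpm p2Na.
  exact: has_clock_skew_section p_gt0 Fc Fs sc sa.
apply: (has_clock_or_twisted_clock p_gt0 F0c p2a) => x.
have Dx : (p%:Z %| D x - D x0)%Z.
  case/orP: (Dpm x) => // Dx; have -> : D x - D x0 = (D x + D x0) - 2 * D x0 by ring.
  exact: rpredB Dx p2a.
case cx: (c x); rewrite /lift01 cx /=.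
- have := Fs (x, true); rewrite /skew_product /= cx /= => h1.
  have -> : F0 (alpha x) - F0 x - 1 + 1 * D x0
    = (F (alpha x, false) - F (x, true) - 1) + (D x - D x0) + 2 * D x0 by rewrite /D /F0; ring.
  by apply: rpredD; first apply: rpredD.
- by have := Fs (x, false); rewrite /skew_product /= cx mul0r addr0.
Qed.

Lemma twisted_clock_exponent p : has_clock (skew_product alpha c) p -> ~ has_clock alpha p ->
  exists v, [/\ twisted_clock alpha c (2 ^ v), has_clock alpha (2 ^ v)
              & ~ has_clock alpha (2 ^ v.+1)].
Proof.
move=> skew_p alpha_Np; have p_gt0 := skew_p.1.
case: (skew_product_clock_cases skew_p) => [//|[q pE Wq]].
have q_gt0 : (0 < q)%N by move: p_gt0; rewrite pE muln_gt0.
have [v [u [qE u_odd]]] := pow2_odd_decomp q_gt0.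
have Wv : twisted_clock alpha c (2 ^ v).
  by rewrite qE in Wq; exact: twisted_clock_pow2_part Wq u_odd.
exists v; split=> //; first by apply: twisted_clock_has_clock Wv; rewrite expn_gt0.
move=> alpha_2v1; apply: alpha_Np; rewrite pE qE mulnA -expnS.
apply: (has_clock_pow2_odd alpha_2v1 _ u_odd).
apply: has_clock_dvd (twisted_clock_has_clock q_gt0 Wq) _ _.
  by rewrite qE dvdn_mull.
exact: odd_gt0.
Qed.

Lemma skew_product_clockE v : twisted_clock alpha c (2 ^ v) -> ~ has_clock alpha (2 ^ v.+1) ->
  has_clock (skew_product alpha c) =
    [set m | exists2 p, has_clock alpha p & m = (2 * p)%N] `|` has_clock alpha.
Proof.
move=> Wv alpha_N2v1.
have alpha_2v : has_clock alpha (2 ^ v) by apply: twisted_clock_has_clock Wv; rewrite expn_gt0.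
apply/seteqP; split=> [m skew_m | m [[p alpha_p ->] | alpha_m]].
- case: (skew_product_clock_cases skew_m) => [|[q mE Wq]]; [by right | left].
  have q_gt0 : (0 < q)%N by move: skew_m.1; rewrite mE muln_gt0.
  by exists q => //; exact: twisted_clock_has_clock Wq.
- have [w [t [pE t_odd]]] := pow2_odd_decomp alpha_p.1.
  have alpha_t : has_clock alpha t.
    by apply: has_clock_dvd alpha_p _ _; rewrite ?pE ?dvdn_mull ?odd_gt0 ?dvdnn.
  case: (ltngtP w v) => wv.
  + apply: has_clock_skew_product; rewrite pE mulnA -expnS.
    apply: has_clock_pow2_odd _ alpha_t t_odd.
    by apply: has_clock_dvd alpha_2v _ _; rewrite ?dvdn_exp2l ?expn_gt0.
  + exfalso; apply: alpha_N2v1; apply: has_clock_dvd alpha_p _ _; last by rewrite expn_gt0.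
    by rewrite pE dvdn_mulr // dvdn_exp2l.
  + rewrite pE wv; apply: twisted_clock_skew_product.
      by rewrite muln_gt0 expn_gt0 (odd_gt0 t_odd).
    apply: (twisted_clock_mul_odd Wv alpha_t t_odd).
    by rewrite -expnS coprime_pexpl // coprime2n.
- exact: has_clock_skew_product.
Qed.

Lemma twisted_clock_cobound v (f : X -> int) :
  continuous c -> twisted_clock alpha c (2 ^ v) ->
  cobound alphai (fun x => (2 ^ v)%N%:Z * f x - 1) ->
  exists g : X -> int, cont_int g /\ cobound alphai (fun x => lift01 c x - f x - 2 * g x).
Proof.
move=> cc [H [Hc Ha]] [h [hc hE]]; have [_ [_ aiK] ac _ _] := minimal.
pose W x := H (alpha x) - H x - 1 + lift01 c x * (2 ^ v)%N%:Z.
have Wc : locally_constant W.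
  apply: (locally_constant_map2 (fun a b => a - 1 + b * (2 ^ v)%N%:Z)).
    exact: (locally_constant_map2 (fun a b => a - b) (locally_constant_comp Hc ac) Hc).
  apply: (locally_constant_map (fun b : bool => (nat_of_bool b)%:Z)).
  exact: continuous_bool_locally_constant.
pose e x := (W x %/ (2 * 2 ^ v)%N%:Z)%Z.
have eE x : e x * (2 * 2 ^ v)%N%:Z = W x := divzK (Ha x).
pose k x := - H (alpha x) - h x.
have kc : locally_constant k.
  apply: (locally_constant_map2 (fun a b => - a - b)); first exact: locally_constant_comp Hc ac.
  exact/cont_intP.
have kE x : (2 ^ v)%N%:Z * (lift01 c x - f x - 2 * e x) = k x - k (alphai x).
  have -> : (2 ^ v)%N%:Z * (lift01 c x - f x - 2 * e x) =
     lift01 c x * (2 ^ v)%N%:Z - ((2 ^ v)%N%:Z * f x - 1) - 1 - e x * (2 * 2 ^ v)%N%:Z.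
    by rewrite PoszM; ring.
  by rewrite hE eE /W /k aiK; ring.
have [k' k'c k'E] : exists2 k' : X -> int, locally_constant k' &
    forall x, k x - k (alphai x) = (2 ^ v)%N%:Z * (k' x - k' (alphai x)).
  by apply: coboundary_div kc _; rewrite ?expn_gt0 // => x; rewrite -kE dvdz_mulr.
exists e; split; first exact/cont_intP/(locally_constant_map (divz^~ _) Wc).
exists k'; split=> [|x]; first exact/cont_intP.
by apply: (@mulfI _ (2 ^ v)%N%:Z); rewrite ?eqz_nat ?expn_eq0 // kE k'E.
Qed.

End Minimal.

Unset Implicit Arguments.

Theorem lemma4p6 (X : topologicalType) (alpha alphai : X -> X) (c : X -> bool) :
  cantor_minimal alpha alphai -> continuous c ->
  periodic_spectrum alpha <> periodic_spectrum (skew_product alpha c) ->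
  exists n : nat, [/\ (0 < n)%N, periodic_spectrum alpha (2 ^ n.-1)%N, ~ periodic_spectrum alpha (2 ^ n)%N,
    periodic_spectrum (skew_product alpha c) = [set m | exists2 p, periodic_spectrum alpha p & m = (2 * p)%N] `|` periodic_spectrum alpha &
    forall f : X -> int, cont_int f ->
      cobound alphai (fun x => Posz (2 ^ n.-1)%N * f x - 1) ->
      exists g : X -> int, cont_int g /\
        cobound alphai (fun x => lift01 c x - f x - 2 * g x)].
Proof.
move=> minimal cc spectra_neq; have [_ [aK aiK] _ aic _] := minimal.
rewrite (periodic_spectrumE aK aiK aic) in spectra_neq *.
have skew_cont := continuous_skew_inv aic cc.
rewrite (periodic_spectrumE (skew_productK c aK) (skew_invK c aiK) skew_cont) in spectra_neq *.
have [p skew_p alpha_Np] : exists2 p, has_clock (skew_product alpha c) p & ~ has_clock alpha p.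
  apply: contrapT => none; apply: spectra_neq; apply/seteqP; split=> p.
    exact: has_clock_skew_product.
  by move=> skew_p; apply: contrapT => alpha_Np; apply: none; exists p.
have [v [Wv alpha_2v alpha_N2v1]] := twisted_clock_exponent minimal skew_p alpha_Np.
exists v.+1; split=> //; first exact: (skew_product_clockE minimal Wv alpha_N2v1).
by move=> f _; exact: (twisted_clock_cobound minimal cc Wv).
Qed.
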